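(* Under the setting of the context, suppose $\lambda\mapsto q_\lambda$ is differentiable at $\lambda=0$, $f_0,f_1$ are continuous at $q_0$, and $p_0f_0(q_0)+p_1f_1(q_0)>0$. Then $$\frac{dq_\lambda}{d\lambda}\Big|_{\lambda=0}=\frac{p_1f_1(q_0)}{p_0f_0(q_0)+p_1f_1(q_0)}.$$
   Context: $(X,Y)$ is a random pair on $\mathcal{X}\times[C]$. A classifier gives predicted class $\hat y(x)\in[C]$; a map $g:[C]\to[G]$ partitions classes into groups; $d(y,y'):=\mathbb{I}\{g(y)\ne g(y')\}$. For a score $s(x,y)$ and $\lambda\ge0$, $s_\lambda(x,y):=s(x,y)+\lambda d(y,\hat y(x))$. $\mathcal{Y}_0(x):=\{y: d(y,\hat y(x))=0\}$, $\mathcal{Y}_1(x):=\{y:d(y,\hat y(x))\ne0\}$; $p_0:=\mathbb{P}(Y\in\mathcal{Y}_0(X))\in(0,1)$, $p_1:=1-p_0$; $F_z(t):=\mathbb{P}(s(X,Y)\le t\mid Y\in\mathcal{Y}_z(X))$ for $z\in\{0,1\}$, assumed absolutely continuous with density $f_z=F_z'$. For small $\lambda\ge 0$, $q_\lambda$ satisfies $\mathbb{P}(s_\lambda(X,Y)\le q_\lambda)=1-\alpha$ for a fixed $\alpha\in(0,1)$. *)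

From HB Require Import structures.
From mathcomp Require Import all_boot all_order all_algebra.
From mathcomp Require Import all_classical all_reals all_analysis.
Set Implicit Arguments. Unset Strict Implicit. Unset Printing Implicit Defensive.
Import Order.TTheory GRing.Theory Num.Theory.
Import numFieldNormedType.Exports.
Local Open Scope classical_set_scope.
Local Open Scope ring_scope.

Section Conformal.
Context {R : realType} {d dX : measure_display}
  {Omega : measurableType d} {Xt : measurableType dX} {C G : nat}.

Definition gdist (g : 'I_C -> 'I_G) (y y' : 'I_C) : R :=
  if g y != g y' then 1 else 0.

Definition slam (s : Xt -> 'I_C -> R) (yhat : Xt -> 'I_C) (g : 'I_C -> 'I_G)
  (lam : R) (x : Xt) (y : 'I_C) : R :=
  s x y + lam * gdist g y (yhat x).

(* the event {Y in Y_z(X)} : z = false for Y_0 (same group), true for Y_1 *)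
Definition evY' (X : Omega -> Xt) (Y : Omega -> 'I_C) (yhat : Xt -> 'I_C)
  (g : 'I_C -> 'I_G) (z : bool) : set Omega :=
  [set w | ((gdist g (Y w) (yhat (X w)) : R) != 0) = z].

Definition pz (P : probability Omega R) X Y yhat g (z : bool) : R :=
  fine (P (evY' X Y yhat g z)).

Definition Fz (P : probability Omega R) X Y yhat g (s : Xt -> 'I_C -> R)
  (z : bool) (t : R) : R :=
  fine (P ([set w | s (X w) (Y w) <= t] `&` evY' X Y yhat g z))
  / pz P X Y yhat g z.

End Conformal.

Notation evY R := (@evY' R _ _ _ _ _ _).

From HB Require Import structures.
From mathcomp Require Import all_boot all_order all_algebra.
From mathcomp Require Import all_classical all_reals all_analysis.
From mathcomp Require Import ring.

Set Implicit Arguments.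
Unset Strict Implicit.
Unset Printing Implicit Defensive.
Import Order.TTheory GRing.Theory Num.Theory.
Import numFieldNormedType.Exports.
Local Open Scope classical_set_scope.
Local Open Scope ring_scope.

(* Up to the threshold q_lam, the coverage probability is
   G(lam) = p0 F0(q_lam) + p1 F1(q_lam - lam), because adding lam to the score
   shifts exactly the out-of-group labels. G is constant for small lam >= 0, so
   its right derivative at 0 vanishes; by the chain rule (in Caratheodory's form,
   which only needs the one-sided derivative of q) and the fundamental theorem of
   calculus this reads p0 f0(q0) q' + p1 f1(q0) (q' - 1) = 0. *)

Section right_derivative.
Variable R : realType.

Lemma right_slope_cvg_cont (u : R -> R) (M : R) :
  (u h - u 0) / h @[h --> 0^'+] --> M -> u h @[h --> 0^'+] --> u 0.
Proof.
move=> uM.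
have hcvg : h @[h --> (0 : R)^'+] --> 0 := cvg_at_right_filter cvg_id.
have uE := cvgD (cvg_cst (u 0)) (cvgM hcvg uM); rewrite mul0r addr0 in uE.
apply: cvg_trans (uE _ _ _); apply: near_eq_cvg; near=> h.
have h0 : h != 0 by rewrite gt_eqF //; near: h; exact: nbhs_right_gt.
by rewrite !fctE /GRing.mul_fun /= mulrC divfK // addrC subrK.
Unshelve. all: by end_near. Qed.

Lemma is_derive_comp_right_slope (F u : R -> R) (l M : R) :
  is_derive (u 0) 1 F l -> (u h - u 0) / h @[h --> 0^'+] --> M ->
  (F (u h) - F (u 0)) / h @[h --> 0^'+] --> l * M.
Proof.
move=> /is_derive1_caratheodory[k [FE kc <-]] uM.
have ku : k (u h) @[h --> 0^'+] --> k (u 0).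
  exact: (@continuous_cvg _ _ _ _ _ u k (u 0) kc (right_slope_cvg_cont uM)).
apply: cvg_trans (cvgM ku uM); apply: near_eq_cvg; near=> h.
by rewrite /= FE mulrA.
Unshelve. all: by end_near. Qed.

Lemma right_slope_implicit (F0 F1 q : R -> R) (a b c l0 l1 L delta : R) :
  is_derive (q 0) 1 F0 l0 -> is_derive (q 0) 1 F1 l1 ->
  (q h - q 0) / h @[h --> 0^'+] --> L -> 0 < delta ->
  (forall h, 0 <= h < delta -> a * F0 (q h) + b * F1 (q h - h) = c) ->
  a * l0 * L + b * l1 * (L - 1) = 0.
Proof.
move=> dF0 dF1 qL delta_gt0 Gc.
have shiftL : (q h - h - (q 0 - 0)) / h @[h --> 0^'+] --> L - 1.
  apply: cvg_trans (cvgB qL (cvg_cst (1 : R))); apply: near_eq_cvg; near=> h.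
  have h0 : h != 0 by rewrite gt_eqF //; near: h; exact: nbhs_right_gt.
  by rewrite !fctE; field.
(* [fun h => q h - h] takes the value [q 0 - 0], not convertible to [q 0], at 0 *)
rewrite -[q 0]subr0 in dF1.
have := cvgD (cvgM (cvg_cst a) (is_derive_comp_right_slope dF0 qL))
             (cvgM (cvg_cst b) (is_derive_comp_right_slope dF1 shiftL)).
rewrite !mulrA => lim.
apply: (cvg_unique _ (lim _ _ _ _ _)); first exact: norm_hausdorff.
apply: cvg_near_cst; near=> h.
have h_gt0 : 0 < h by near: h; exact: nbhs_right_gt.
have h_lt : h < delta by near: h; exact: nbhs_right_lt.
rewrite /GRing.mul_fun !fctE !mulrA -mulrDl.
rewrite [X in X / _](_ : _ = (a * F0 (q h) + b * F1 (q h - h))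
                           - (a * F0 (q 0) + b * F1 (q 0 - 0))); last by ring.
by rewrite !Gc ?subrr ?mul0r ?lexx ?(ltW h_gt0).
Unshelve. all: by end_near. Qed.

Lemma is_derive_integral_Ny (f F : R -> R) (c : R) :
  (lebesgue_measure : measure _ R).-integrable setT (EFin \o f) ->
  (forall t, (F t)%:E = (\int[lebesgue_measure]_(u in `]-oo, t]) (f u)%:E)%E) ->
  {for c, continuous f} -> is_derive c 1 F (f c).
Proof.
move=> intf FE fc.
have -> : F = fun t => (\int[lebesgue_measure]_(u in `]-oo, t]) f u)%R.
  by apply/funext => t; rewrite /Rintegral -FE.
have intf' : (lebesgue_measure : measure _ R).-integrable `]-oo, c + 1] (EFin \o f).
  exact: integrableS intf.
have c_lt : c < c + 1 by rewrite ltrDl.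
have [Fc F'c] := continuous_FTC1 c_lt intf' (ltNyr c) fc.
by split; rewrite // -derive1E.
Qed.

End right_derivative.

Section coverage_probability.
Context {R : realType} {d dX : measure_display}
  {Omega : measurableType d} {Xt : measurableType dX} {C G : nat}.
Variables (P : probability Omega R) (X : Omega -> Xt) (Y : Omega -> 'I_C).
Variables (yhat : Xt -> 'I_C) (g : 'I_C -> 'I_G) (s : Xt -> 'I_C -> R).

Let E z := evY R X Y yhat g z.
Let score_le t := [set w | s (X w) (Y w) <= t].

Lemma evY_trueC : E true = ~` E false.
Proof.
by apply/funext => w; apply/propext; rewrite /E /evY' /=; case: (_ != 0).
Qed.

Lemma slam_le_setU lam t :
  [set w | slam s yhat g lam (X w) (Y w) <= t] =
  (score_le t `&` E false) `|` (score_le (t - lam) `&` E true).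
Proof.
apply/funext => w; apply/propext; rewrite /slam /E /score_le /evY' /gdist /=.
case: ifP => _; rewrite ?oner_eq0 ?eqxx /= ?mulr1 ?mulr0 ?addr0 lerBrDr.
- by split=> [|[[]|[]]]; [right|..].
- by split=> [|[[]|[]]]; [left|..].
Qed.

Hypothesis ms : measurable_fun setT (fun w => s (X w) (Y w)).
Hypothesis mE0 : measurable (E false).

Let mE z : measurable (E z).
Proof. by case: z; rewrite ?evY_trueC //; exact: measurableC. Qed.

Let mscore_le t : measurable (score_le t).
Proof.
have := @measurable_fun_le _ _ _ setT _ (fun=> t) measurableT ms (measurable_cst t).
by rewrite setTI.
Qed.

Lemma pz_true : pz P X Y yhat g true = 1 - pz P X Y yhat g false.
Proof.
rewrite /pz -/(E true) -/(E false) evY_trueC probability_setC //.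
by rewrite fineB ?fin_num_measure.
Qed.

Lemma prob_slam_le lam t : 0 < pz P X Y yhat g false < 1 ->
  fine (P [set w | slam s yhat g lam (X w) (Y w) <= t]) =
  pz P X Y yhat g false * Fz P X Y yhat g s false t +
  pz P X Y yhat g true * Fz P X Y yhat g s true (t - lam).
Proof.
move=> /andP[p0_gt0 p0_lt1].
have pz_neq0 z : pz P X Y yhat g z != 0.
  by case: z; rewrite ?pz_true gt_eqF ?subr_gt0.
rewrite /Fz !(mulrC (pz _ _ _ _ _ _)) !divfK // slam_le_setU measureU.
- by rewrite fineD ?fin_num_measure //; exact: measurableI.
- exact: measurableI.
- exact: measurableI.
- by rewrite evY_trueC; apply/seteqP; split=> w // [[_ ?] [_ ?]].
Qed.

End coverage_probability.

Theorem mainTheorem7 (R : realType) (d dX : measure_display)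
  (Omega : measurableType d) (Xt : measurableType dX) (C G : nat)
  (P : probability Omega R) (X : Omega -> Xt) (Y : Omega -> 'I_C)
  (yhat : Xt -> 'I_C) (g : 'I_C -> 'I_G) (s : Xt -> 'I_C -> R)
  (alpha : R) (q : R -> R) (f0 f1 : R -> R) :
  measurable_fun setT (fun w => s (X w) (Y w)) ->
  measurable (evY R X Y yhat g false) ->
  0 < pz P X Y yhat g false < 1 ->
  (lebesgue_measure : measure _ R).-integrable setT (EFin \o f0) ->
  (lebesgue_measure : measure _ R).-integrable setT (EFin \o f1) ->
  (forall t, (Fz P X Y yhat g s false t)%:E =
     (\int[lebesgue_measure]_(u in `]-oo, t]) (f0 u)%:E)%E) ->
  (forall t, (Fz P X Y yhat g s true t)%:E =
     (\int[lebesgue_measure]_(u in `]-oo, t]) (f1 u)%:E)%E) ->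
  0 < alpha < 1 ->
  (exists2 delta : R, 0 < delta & forall lam, 0 <= lam < delta ->
     fine (P [set w | slam s yhat g lam (X w) (Y w) <= q lam]) = 1 - alpha) ->
  cvg ((fun h => (q h - q 0) / h) @ 0^'+) ->
  {for q 0, continuous f0} -> {for q 0, continuous f1} ->
  0 < pz P X Y yhat g false * f0 (q 0) + pz P X Y yhat g true * f1 (q 0) ->
  lim ((fun h => (q h - q 0) / h) @ 0^'+) =
    pz P X Y yhat g true * f1 (q 0) /
    (pz P X Y yhat g false * f0 (q 0) + pz P X Y yhat g true * f1 (q 0)).
Proof.
move=> ms mE0 p0_01 int0 int1 F0E F1E _ [delta delta_gt0 coverage] qcvg f0c f1c S_gt0.
have coverage_split lam : 0 <= lam < delta ->
    pz P X Y yhat g false * Fz P X Y yhat g s false (q lam) +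
    pz P X Y yhat g true * Fz P X Y yhat g s true (q lam - lam) = 1 - alpha.
  by move=> lam_delta; rewrite -(prob_slam_le ms mE0 lam _ p0_01) coverage.
have := right_slope_implicit (is_derive_integral_Ny int0 F0E f0c)
  (is_derive_integral_Ny int1 F1E f1c) (cvgP _ qcvg) delta_gt0 coverage_split.
set L := lim _ => slope_eq.
rewrite -[L](mulfK (lt0r_neq0 S_gt0)); congr (_ / _).
by apply/eqP; rewrite -subr_eq0; apply/eqP; rewrite -[RHS]slope_eq; ring.
Qed.
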